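(* Let $G$ be an index coding problem and let $G'$ be the problem obtained from $G$ by deleting all edges $i\to j$ (i.e., removing $i$ from $A_j$) that do not lie on any directed cycle of the side information graph. Then $G$ and $G'$ have the same capacity region.
   Context: Index coding: an instance with $n$ messages is specified by side information sets $A_1,\ldots,A_n$ with $A_j\subseteq[1:n]\setminus\{j\}$, equivalently a directed side information graph on $[1:n]$ with an edge $i\to j$ iff $i\in A_j$. A $(t_1,\ldots,t_n,r)$ index code (with $t_j$ nonnegative integers, $r$ a positive integer) consists of an encoder $\phi:\prod_i\{0,1\}^{t_i}\to\{0,1\}^r$ and decoders $\psi_j:\{0,1\}^r\times\prod_{k\in A_j}\{0,1\}^{t_k}\to\{0,1\}^{t_j}$ with $\psi_j(\phi(x^n),(x_k)_{k\in A_j})=x_j$ for all message tuples $x^n$ and all $j$. A nonnegative rate tuple is achievable if $R_j\le t_j/r$ for all $j$ for some such code; the capacity region is the closure of the set of achievable rate tuples. *)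

From mathcomp Require Import all_boot.
From Stdlib Require Import Reals.

Set Implicit Arguments.
Unset Strict Implicit.
Unset Printing Implicit Defensive.

Definition side_info_ok (n : nat) (A : 'I_n -> {set 'I_n}) : Prop :=
  forall j : 'I_n, j \notin A j.

Definition sig_edge (n : nat) (A : 'I_n -> {set 'I_n}) : rel 'I_n :=
  fun i j => i \in A j.

Definition msgs (n : nat) (t : 'I_n -> nat) : Type :=
  forall i : 'I_n, (t i).-tuple bool.

Definition is_index_code (n : nat) (A : 'I_n -> {set 'I_n})
    (t : 'I_n -> nat) (r : nat)
    (phi : msgs t -> r.-tuple bool)
    (psi : forall j : 'I_n, r.-tuple bool ->
             (forall k : 'I_n, k \in A j -> (t k).-tuple bool) ->
             (t j).-tuple bool) : Prop :=
  forall (x : msgs t) (j : 'I_n), psi j (phi x) (fun k _ => x k) = x j.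

Definition achievable (n : nat) (A : 'I_n -> {set 'I_n}) (Rt : 'I_n -> R) : Prop :=
  (forall j, 0 <= Rt j)%R /\
  exists (t : 'I_n -> nat) (r : nat) (phi : msgs t -> r.-tuple bool)
         (psi : forall j : 'I_n, r.-tuple bool ->
             (forall k : 'I_n, k \in A j -> (t k).-tuple bool) ->
             (t j).-tuple bool),
    (0 < r)%N /\ is_index_code phi psi /\
    (forall j, Rt j <= INR (t j) / INR r)%R.

Definition closure_Rn (n : nat) (S : ('I_n -> R) -> Prop) (Rt : 'I_n -> R) : Prop :=
  forall eps : R, (0 < eps)%R ->
    exists Rt' : 'I_n -> R, S Rt' /\ forall j, (Rabs (Rt j - Rt' j) < eps)%R.

Definition capacity_region (n : nat) (A : 'I_n -> {set 'I_n}) : ('I_n -> R) -> Prop :=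
  closure_Rn (achievable A).

(* Edge i -> j lies on a directed cycle iff j reaches i in the graph. *)
Definition edge_on_cycle (n : nat) (A : 'I_n -> {set 'I_n}) (i j : 'I_n) : bool :=
  (i \in A j) && connect (sig_edge A) j i.

Definition prune_acyclic_edges (n : nat) (A : 'I_n -> {set 'I_n}) : 'I_n -> {set 'I_n} :=
  fun j => [set i | edge_on_cycle A i j].

From Stdlib Require Import Reals Lra Psatz FunctionalExtensionality.
From mathcomp Require Import all_boot zify.

Set Implicit Arguments.
Unset Strict Implicit.
Unset Printing Implicit Defensive.

(* Deleting edges only removes side information, so the capacity region of G'
   is contained in that of G.  Conversely, let u -> j be an edge off every
   cycle and Q the set of vertices reachable from j: no edge leaves Q, and u
   lies outside Q.  Deleting all edges that enter Q from outside lengthens a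
   code by only about log2 (t_1 + ... + t_n) bits: receivers outside
   Q never look at messages in Q, so for them the codeword may be computed
   with arbitrary Q-messages, from a small set hitting all the possibilities;
   receivers in Q decode a second codeword in which the messages outside Q are
   frozen.  Running the code on many blocks at once makes this additive
   overhead negligible, so the rates survive up to closure, and removing the
   acyclic edges one cut at a time proves the theorem. *)

Section Codes.
Variables (n : nat) (A : 'I_n -> {set 'I_n}) (t : 'I_n -> nat).

Definition is_code (W : Type) (phi : msgs t -> W)
    (psi : forall j : 'I_n, W ->
             (forall k : 'I_n, k \in A j -> (t k).-tuple bool) ->
             (t j).-tuple bool) : Prop :=
  forall (x : msgs t) (j : 'I_n), psi j (phi x) (fun k _ => x k) = x j.

Definition has_code (r : nat) : Prop :=
  exists (phi : msgs t -> r.-tuple bool) psi, is_index_code (A:=A) phi psi.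

Lemma is_code_decode W (phi : msgs t -> W) psi : is_code phi psi ->
  forall x j s, (forall k hk, s k hk = x k) -> psi j (phi x) s = x j.
Proof.
move=> code x j s sx; rewrite -[RHS](code x j); congr (psi j _ _).
by apply: functional_extensionality_dep => k; apply: functional_extensionality_dep.
Qed.

Lemma has_code_of_card (W : finType) (phi : msgs t -> W) psi r :
  is_code phi psi -> #|W| <= 2 ^ r -> has_code r.
Proof.
move=> code W_small.
have W_le : #|W| <= #|{: r.-tuple bool}| by rewrite card_tuple card_bool.
pose g (w : W) : r.-tuple bool := enum_val (widen_ord W_le (enum_rank w)).
have g_inj : injective g.
  move=> w1 w2 /enum_val_inj E; apply: enum_rank_inj; apply: val_inj.
  exact: (congr1 val E).
exists (fun x => g (phi x)).
exists (fun j y s => if [pick w | g w == y] is Some w then psi j w s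
                     else nseq_tuple (t j) false).
move=> x j; case: pickP => [w /eqP /g_inj -> | /(_ (phi x))]; first exact: code.
by rewrite eqxx.
Qed.

End Codes.

Definition fin_transfer (T U : finType) (eqTU : #|T| = #|U|) (x : T) : U :=
  enum_val (cast_ord eqTU (enum_rank x)).

Lemma fin_transferK (T U : finType) (eqTU : #|T| = #|U|) :
  cancel (fin_transfer eqTU) (fin_transfer (esym eqTU)).
Proof. by move=> x; rewrite /fin_transfer enum_valK cast_ordK enum_rankK. Qed.

Lemma card_blocks k m :
  #|{: (k * m).-tuple bool}| = #|{: {ffun 'I_k -> m.-tuple bool}}|.
Proof. by rewrite card_ffun !card_tuple card_bool card_ord -expnM mulnC. Qed.

Lemma has_code_scale n (A : 'I_n -> {set 'I_n}) t r k :
  has_code A t r -> has_code A (fun j => k * t j) (k * r).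
Proof.
move=> [phi [psi code]].
pose blocks j := fin_transfer (card_blocks k (t j)).
pose unblocks j := fin_transfer (esym (card_blocks k (t j))).
apply: (@has_code_of_card _ _ _ {ffun 'I_k -> r.-tuple bool}
   (fun x => [ffun b => phi (fun i => blocks i (x i) b)])
   (fun j w s => unblocks j [ffun b => psi j (w b) (fun l hl => blocks l (s l hl) b)])).
  move=> x j /=; rewrite -[RHS](fin_transferK (card_blocks k (t j))).
  by congr (unblocks j _); apply/ffunP => b; rewrite !ffunE code.
by rewrite card_ffun card_tuple card_bool card_ord -expnM mulnC.
Qed.

Definition msgs_fin n (t : 'I_n -> nat) := {dffun forall i : 'I_n, (t i).-tuple bool}.

Lemma card_msgs_fin n (t : 'I_n -> nat) : #|{: msgs_fin t}| = 2 ^ (\sum_i t i).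
Proof.
rewrite card_dep_ffun expn_sum foldrE big_map big_enum /=.
by apply: eq_bigr => i _; rewrite card_tuple card_bool.
Qed.

Definition fill_side_info n (t : 'I_n -> nat) (D : {set 'I_n})
    (s : forall k, k \in D -> (t k).-tuple bool) (d : msgs_fin t) : msgs t :=
  fun k => (if k \in D as b return (k \in D) = b -> (t k).-tuple bool
             then fun kD => s k kD else fun _ => d k) erefl.

Lemma fill_side_infoE n (t : 'I_n -> nat) (D : {set 'I_n}) s (x : msgs t) d k :
  (forall k kD, s k kD = x k) -> fill_side_info (D:=D) s d k = if k \in D then x k else d k.
Proof.
move=> sx; rewrite /fill_side_info.
suff gen b (e : (k \in D) = b) :
    (if b as b' return (k \in D) = b' -> _ then fun kD => s k kD else fun=> d k) e
    = if b then x k else d k by exact: gen.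
by case: b e.
Qed.

Lemma disjointsU (T : finType) (A B C : {set T}) :
  [disjoint A :|: B & C] = [disjoint A & C] && [disjoint B & C].
Proof. by rewrite -!setI_eq0 setIUl setU_eq0. Qed.

(* Greedy hitting sets: if every [S x] has at least [m] of the at most [m * K]
   points, some point lies in a [1/K] fraction of the [S x], so [K] greedy
   choices halve the number of sets not yet hit. *)
Section HittingSet.
Variables (X Y : finType) (S : X -> {set Y}) (m K : nat).
Hypotheses (m_gt0 : 0 < m) (S_large : forall x, m <= #|S x|) (Y_small : #|Y| <= m * K).

Lemma exists_popular_point (P : {set X}) : P != set0 ->
  exists y, #|P| <= #|[set x in P | y \in S x]| * K.
Proof.
case/set0Pn=> x0 x0P.
have Y_gt0 : 0 < #|Y| by apply: leq_trans m_gt0 (leq_trans (S_large x0) (max_card _)).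
have P_gt0 : 0 < #|P| by apply/card_gt0P; exists x0.
apply/existsP; apply: contraT; rewrite negb_exists => /forallP few.
have double_count : \sum_y #|[set x in P | y \in S x]| = \sum_(x in P) #|S x|.
  under eq_bigr => y _ do rewrite -sum1_card big_mkcond /=.
  rewrite exchange_big /= [RHS]big_mkcond /=; apply: eq_bigr => x _.
  case: (boolP (x \in P)) => xP; last by rewrite big1 // => y _; rewrite inE (negbTE xP).
  rewrite -sum1_card [RHS]big_mkcond /=; apply: eq_bigr => y _.
  by rewrite inE xP.
have upper : \sum_y #|[set x in P | y \in S x]| * K <= \sum_(y : Y) (#|P|).-1.
  by apply: leq_sum => y _; have := few y; rewrite -ltnNge; lia.
have lower : #|P| * m <= \sum_(x in P) #|S x|.
  by rewrite -sum1_card big_distrl /=; apply: leq_sum => x _; rewrite mul1n.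
rewrite -big_distrl /= double_count sum_nat_const cardT -cardE in upper.
have : #|P| * m * K <= #|Y| * (#|P|).-1 by apply: leq_trans upper; exact: leq_mul.
nia.
Qed.

Definition unhit (P : {set X}) (C : {set Y}) := [set x in P | [disjoint C & S x]].

Lemma greedy_hitting (P : {set X}) h j : 0 < h -> exists C : {set Y},
  #|C| <= j /\ (#|unhit P C| < h \/ #|unhit P C| * K + j * h <= #|P| * K).
Proof.
move=> h_gt0; elim: j => [|j [C [C_small progress]]].
  exists set0; rewrite cards0; split=> //; right; rewrite addn0.
  by apply: leq_mul => //; apply: subset_leq_card; apply/subsetP=> x; rewrite inE => /andP[].
case: (ltnP #|unhit P C| h) => many; first by exists C; split; [lia | left].
case: progress => progress; first lia.
have [y popular] : exists y, #|unhit P C| <= #|[set x in unhit P C | y \in S x]| * K.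
  by apply: exists_popular_point; apply/set0Pn/card_gt0P; lia.
exists (y |: C); split; first by rewrite cardsU1; case: (y \notin C) => /=; lia.
right; set U := unhit P C in popular progress many *.
have -> : unhit P (y |: C) = U :\: [set x in U | y \in S x].
  apply/setP=> x; rewrite !inE disjointsU disjoints1.
  by case: (x \in P); case: (y \in S x); case: [disjoint C & S x].
have := cardsID [set x in U | y \in S x] U.
rewrite (setIidPr _); last by apply/subsetP=> x; rewrite inE => /andP[].
nia.
Qed.

Lemma exists_hitting_set l (P : {set X}) : 0 < K -> #|P| < 2 ^ l ->
  exists C : {set Y}, #|C| <= K * l /\ {in P, forall x, ~~ [disjoint C & S x]}.
Proof.
move=> K_gt0; elim: l P => [|l IH] P P_small.
  exists set0; split=> [|x]; first by rewrite cards0.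
  by move: P_small; rewrite expn0 ltnS leqn0 cards_eq0 => /eqP ->; rewrite inE.
have [C1 [C1_small progress]] := greedy_hitting P K (expn_gt0 2 l).
have unhit_small : #|unhit P C1| < 2 ^ l.
  by case: progress => // progress; rewrite expnS in P_small; nia.
have [C2 [C2_small C2_hits]] := IH _ unhit_small.
exists (C1 :|: C2); split.
  by apply: leq_trans (leq_card_setU _ _) _; rewrite mulnS; lia.
move=> x xP; rewrite disjointsU negb_and.
case: (boolP [disjoint C1 & S x]) => //= C1x.
by apply: C2_hits; rewrite inE xP C1x.
Qed.

End HittingSet.

Definition out_closed n (A : 'I_n -> {set 'I_n}) (Q : {set 'I_n}) : Prop :=
  forall u v, sig_edge A u v -> u \in Q -> v \in Q.

Definition drop_in_edges n (A : 'I_n -> {set 'I_n}) (Q : {set 'I_n}) (j : 'I_n) :=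
  if j \in Q then A j :&: Q else A j.

Lemma drop_in_edges_sub n (A : 'I_n -> {set 'I_n}) Q j : drop_in_edges A Q j \subset A j.
Proof. by rewrite /drop_in_edges; case: ifP => // _; apply: subsetIl. Qed.

(* The codeword of [x] is [phi (glue c x)], for a fixed [c], together with
   some [phi (glue x z)] from a set [C] hitting every fiber; taking [c] with
   the smallest fiber keeps [#|C| * #|fiber c|] below
   [2 ^ (r + 1) * (1 + \sum_i t i)]. *)
Section DropInEdges.
Variables (n : nat) (A : 'I_n -> {set 'I_n}) (t : 'I_n -> nat) (r : nat).
Variables (phi : msgs t -> r.-tuple bool) (psi : forall j : 'I_n, r.-tuple bool ->
             (forall k : 'I_n, k \in A j -> (t k).-tuple bool) -> (t j).-tuple bool).
Variable Q : {set 'I_n}.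
Hypotheses (code : is_index_code phi psi) (Q_closed : out_closed A Q).
Arguments psi : clear implicits.

Definition glue (u v : msgs_fin t) : msgs t := fun i => if i \in Q then v i else u i.

Definition drop_decoder j (y : r.-tuple bool)
    (s : forall k, k \in drop_in_edges A Q j -> (t k).-tuple bool) (c : msgs_fin t) :=
  psi j y (fun k _ => fill_side_info s c k).
Arguments drop_decoder : clear implicits.

Lemma drop_decoder_inside (c u : msgs_fin t) j s : j \in Q -> (forall k ks, s k ks = u k) ->
  drop_decoder j (phi (glue c u)) s c = u j.
Proof.
move=> jQ su; rewrite /drop_decoder (is_code_decode code) => [|k kA].
  by rewrite /glue jQ.
by rewrite (fill_side_infoE _ _ su) /drop_in_edges /glue jQ inE kA.
Qed.

Lemma drop_decoder_outside (c u z : msgs_fin t) j s : j \notin Q ->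
  (forall k ks, s k ks = u k) -> drop_decoder j (phi (glue u z)) s c = u j.
Proof.
move=> jQ su; rewrite /drop_decoder (is_code_decode code) => [|k kA].
  by rewrite /glue (negbTE jQ).
have kQ : k \notin Q by apply: contra jQ; apply: Q_closed.
by rewrite (fill_side_infoE _ _ su) /drop_in_edges /glue (negbTE jQ) kA (negbTE kQ).
Qed.

Definition fiber (u : msgs_fin t) : {set r.-tuple bool} :=
  [set phi (glue u z) | z : msgs_fin t].

Lemma exists_fiber_hitting_set w : \sum_i t i < 2 ^ w ->
  exists (c : msgs_fin t) (C : {set r.-tuple bool}),
    #|C| * #|fiber c| <= 2 ^ (r + w.+1) /\ forall u, ~~ [disjoint C & fiber u].
Proof.
move=> w_big.
pose c := [arg min_(u < [ffun i => nseq_tuple (t i) false] : msgs_fin t) #|fiber u|].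
have c_min u : #|fiber c| <= #|fiber u| by rewrite /c; case: arg_minnP => // v _; apply.
pose m := #|fiber c|; pose K := (2 ^ r %/ m).+1.
have m_gt0 : 0 < m by apply/card_gt0P; exists (phi (glue c c)); apply: imset_f.
have m_le : m <= 2 ^ r by rewrite -card_bool -card_tuple max_card.
have tuples_small : #|{: r.-tuple bool}| <= m * K.
  by rewrite card_tuple card_bool mulnC ltnW // ltn_ceil.
have msgs_small : #|[set: msgs_fin t]| < 2 ^ (\sum_i t i).+1.
  by rewrite cardsT card_msgs_fin ltn_exp2l.
have [C [C_small C_hits]] :=
  exists_hitting_set m_gt0 c_min tuples_small (ltn0Sn _) msgs_small.
exists c, C; split=> [|u]; last exact: C_hits.
apply: leq_trans (leq_mul C_small (leqnn m)) _.
have Km : K * m <= 2 * 2 ^ r by rewrite [K * m]mulSn mul2n -addnn leq_add // leq_divM.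
by rewrite mulnAC expnD expnS mulnCA mulnA leq_mul.
Qed.

Lemma has_code_drop_in_edges w : \sum_i t i < 2 ^ w ->
  has_code (drop_in_edges A Q) t (r + w.+1).
Proof.
move=> /exists_fiber_hitting_set[c [C [C_small C_hits]]].
pose hit u := odflt (phi (glue u u)) [pick y in C :&: fiber u].
have hitP u : hit u \in C /\ hit u \in fiber u.
  rewrite /hit; case: pickP => [y|none]; first by rewrite inE => /andP[].
  by have := C_hits u; rewrite -setI_eq0 => /set0Pn[y]; rewrite none.
have in_fiber u : phi (glue c u) \in fiber c by apply: imset_f.
pose W : finType := ({y | y \in C} * {y | y \in fiber c})%type.
pose mk (x : msgs t) : msgs_fin t := [ffun i => x i].
pose enc (x : msgs t) : W :=
  (Sub (hit (mk x)) (proj1 (hitP _)), Sub (phi (glue c (mk x))) (in_fiber _)).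
pose dec j (w : W) s := drop_decoder j (if j \in Q then val w.2 else val w.1) s c.
apply: (has_code_of_card (phi := enc) (psi := dec)).
  move=> x j; have <- : mk x j = x j by rewrite ffunE.
  rewrite /dec /enc /=; case: ifP => jQ.
    by apply: drop_decoder_inside => // k _; rewrite ffunE.
  have [_ /imsetP[z _ ->]] := hitP (mk x).
  by apply: drop_decoder_outside => [|k _]; rewrite ?jQ // ffunE.
have card_in (D : {set r.-tuple bool}) : #|[pred y in D]| = #|D| by apply: eq_card.
by rewrite card_prod !card_sig !card_in.
Qed.

End DropInEdges.

Lemma exists_pow2_gt_linear E c : exists s, E * (s + c) < 2 ^ s.
Proof.
pose a := E * c.+2 + 1; exists (a * 2).
have a_lt : a < 2 ^ a by rewrite ltn_expl.
rewrite expnM; nia.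
Qed.

Section RateArithmetic.
Local Open Scope R_scope.

Lemma mul_le_of_le_div (x y a : R) : 0 < a -> x <= y / a -> x * a <= y.
Proof.
move=> a_gt0 /(Rmult_le_compat_r a _ _ (Rlt_le _ _ a_gt0)).
by rewrite /Rdiv Rmult_assoc Rinv_l ?Rmult_1_r //; lra.
Qed.

Lemma scaled_rate_ge0 (y a k o : R) :
  0 <= y -> 0 < a -> 0 < k -> 0 <= o -> 0 <= y * (k * a) / (k * a + o).
Proof.
move=> y_ge0 a_gt0 k_gt0 o_ge0; rewrite /Rdiv.
have ka_gt0 : 0 < k * a by nra.
by apply: Rmult_le_pos; [nra | apply/Rlt_le/Rinv_0_lt_compat; lra].
Qed.

Lemma scaled_rate_le (y a k o b : R) : 0 < a -> 0 < k -> 0 <= o ->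
  y * a <= b -> y * (k * a) / (k * a + o) <= k * b / (k * a + o).
Proof.
move=> a_gt0 k_gt0 o_ge0 ya; rewrite /Rdiv.
have ka_gt0 : 0 < k * a by nra.
by apply: Rmult_le_compat_r; [apply/Rlt_le/Rinv_0_lt_compat; lra | nra].
Qed.

(* The rate lost to an overhead of [o] extra bits on top of [k * a] is
   [y * o / (k * a + o)], at most [b * o / k]. *)
Lemma scaled_rate_close (y a k o b eps : R) : 0 <= y -> y * a <= b -> 1 <= a ->
  0 < k -> 0 <= o -> b * o < eps * k -> Rabs (y - y * (k * a) / (k * a + o)) < eps.
Proof.
move=> y_ge0 ya a_ge1 k_gt0 o_ge0 small.
have len_gt0 : 0 < k * a + o by nra.
have -> : y - y * (k * a) / (k * a + o) = y * o / (k * a + o) by field; lra.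
rewrite Rabs_pos_eq; last first.
  by rewrite /Rdiv; apply: Rmult_le_pos; [nra | apply/Rlt_le/Rinv_0_lt_compat].
apply: (Rmult_lt_reg_r (k * a + o)) => //.
have -> : y * o / (k * a + o) * (k * a + o) = y * o by field; lra.
have bo_ge0 : 0 <= b * o by apply: Rmult_le_pos; nra.
have eps_gt0 : 0 < eps by nra.
have yo_le : y * o <= b * o by apply: Rmult_le_compat_r => //; nra.
have : eps * k <= eps * (k * a + o) by nra.
lra.
Qed.

Lemma exists_small_overhead (T : nat) (eps : R) : 0 < eps ->
  exists s, INR T * INR (s + T).+1 < eps * INR (2 ^ s).
Proof.
move=> eps_gt0.
have [D D_gt] := INR_unbounded (/ eps).
have [s s_big] := exists_pow2_gt_linear (D * T) T.+1.
exists s; move/ltP/lt_INR: s_big; rewrite addnS !mult_INR Rmult_assoc.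
set X := INR T * _ => DX_lt.
have X_ge0 : 0 <= X by apply: Rmult_le_pos; apply: pos_INR.
have epsD : 1 < eps * INR D.
  by have := Rmult_lt_compat_l eps _ _ eps_gt0 D_gt; rewrite Rinv_r //; lra.
have := Rmult_lt_compat_l eps _ _ eps_gt0 DX_lt.
nra.
Qed.

End RateArithmetic.

Section Capacity.
Local Open Scope R_scope.

Lemma closure_Rn_refl n (S : ('I_n -> R) -> Prop) Rt : S Rt -> closure_Rn S Rt.
Proof. by move=> SRt eps eps_gt0; exists Rt; split=> // j; rewrite Rminus_diag Rabs_R0. Qed.

Lemma closure_Rn_trans n (S1 S2 : ('I_n -> R) -> Prop) Rt :
  (forall R1, S1 R1 -> closure_Rn S2 R1) -> closure_Rn S1 Rt -> closure_Rn S2 Rt.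
Proof.
move=> S12 S1Rt eps eps_gt0.
have half_gt0 : 0 < eps / 2 by lra.
have [R1 [S1R1 near1]] := S1Rt _ half_gt0.
have [R2 [S2R2 near2]] := S12 _ S1R1 _ half_gt0.
exists R2; split=> // j.
have := Rabs_triang (Rt j - R1 j) (R1 j - R2 j).
have := near1 j; have := near2 j.
have -> : Rt j - R1 j + (R1 j - R2 j) = Rt j - R2 j by ring.
lra.
Qed.

Lemma achievable_sub n (A B : 'I_n -> {set 'I_n}) Rt :
  (forall j, B j \subset A j) -> achievable B Rt -> achievable A Rt.
Proof.
move=> BA [Rt_ge0 [t [r [phi [psi [r_gt0 [code Rt_le]]]]]]].
split=> //; exists t, r, phi, (fun j y s => psi j y (fun k kB => s k (subsetP (BA j) k kB))).
by split=> //; split=> // x j; apply: code.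
Qed.

(* Repeat the code on [k = 2 ^ s] blocks, then pay [(s + T).+1] bits for the
   dropped edges: the rates move by at most [T * (s + T).+1 / 2 ^ s]. *)
Lemma achievable_drop_in_edges n (A : 'I_n -> {set 'I_n}) Q Rt : out_closed A Q ->
  achievable A Rt -> closure_Rn (achievable (drop_in_edges A Q)) Rt.
Proof.
move=> Q_closed [Rt_ge0 [t [r [phi [psi [r_gt0 [code Rt_le]]]]]]] eps eps_gt0.
set T := \sum_i t i.
have [s small] := exists_small_overhead T eps_gt0.
set k := (2 ^ s)%N; set o := (s + T).+1.
have [phi1 [psi1 code1]] := has_code_scale k (ex_intro _ phi (ex_intro _ psi code)).
have kT_small : (\sum_i k * t i < 2 ^ (s + T))%N.
  by rewrite -big_distrr expnD ltn_pmul2l ?expn_gt0 // ltn_expl.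
have [phi2 [psi2 code2]] := has_code_drop_in_edges code1 Q_closed kT_small.
have r_pos : 0 < INR r by apply/lt_0_INR/ltP.
have k_pos : 0 < INR k by apply/lt_0_INR/ltP; rewrite expn_gt0.
have o_ge0 := pos_INR o.
have Rt_r j : Rt j * INR r <= INR (t j) by apply: mul_le_of_le_div.
exists (fun j => Rt j * (INR k * INR r) / (INR k * INR r + INR o)); split.
  split=> [j|]; first exact: scaled_rate_ge0.
  exists (fun j => k * t j)%N, (k * r + o)%N, phi2, psi2.
  split; first by rewrite addnS.
  split=> [|j]; first exact: code2.
  by rewrite plus_INR !mult_INR; apply: scaled_rate_le.
move=> j; apply: (scaled_rate_close (b := INR T)) => //.
- by apply: Rle_trans (Rt_r j) _; apply/le_INR/leP; rewrite /T (bigD1 j) ?leq_addr.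
- by apply/(le_INR 1)/leP.
Qed.

End Capacity.

Lemma connect_cycle_edges n (A : 'I_n -> {set 'I_n}) a b :
  connect (sig_edge A) a b -> connect (sig_edge A) b a -> connect (edge_on_cycle A) a b.
Proof.
case/connectP=> p; elim: p a => [|x p IH] a /=; first by move=> _ -> _; apply: connect0.
case/andP=> ax xp b_last ba; apply: (connect_trans (y := x)).
  by apply/connect1/andP; split=> //; apply: connect_trans ba; apply/connectP; exists p.
by apply: IH => //; apply: connect_trans ba (connect1 ax).
Qed.

Definition reach_set n (A : 'I_n -> {set 'I_n}) (j : 'I_n) : {set 'I_n} :=
  [set v | connect (sig_edge A) j v].

Lemma out_closed_reach_set n (A : 'I_n -> {set 'I_n}) j : out_closed A (reach_set A j).
Proof. by move=> u v uv; rewrite !inE => ju; apply: connect_trans ju (connect1 uv). Qed.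

Section PruneStep.
Variables (n : nat) (A H : 'I_n -> {set 'I_n}) (j : 'I_n).
Hypotheses (pruned_sub : forall v, prune_acyclic_edges A v \subset H v)
           (sub_A : forall v, H v \subset A v).

Lemma prune_sub_drop_reach v :
  prune_acyclic_edges A v \subset drop_in_edges H (reach_set H j) v.
Proof.
apply/subsetP=> w; rewrite /drop_in_edges; case: ifP => [vQ|_] wG; last exact: subsetP wG.
rewrite inE (subsetP (pruned_sub v)) //= inE.
move: wG; rewrite inE => /andP[wv vw].
have cycle_H : subrel (edge_on_cycle A) (connect (sig_edge H)).
  by move=> x y xy; apply/connect1/(subsetP (pruned_sub y)); rewrite inE.
move: vQ; rewrite inE => /connect_trans; apply.
by apply: connect_sub cycle_H _ _ _; apply: connect_cycle_edges vw (connect1 wv).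
Qed.

Lemma drop_reach_removes_acyclic u : u \in H j -> u \notin prune_acyclic_edges A j ->
  u \notin drop_in_edges H (reach_set H j) j.
Proof.
move=> uH; apply: contra; rewrite /drop_in_edges inE connect0 !inE uH /= => ju.
rewrite /edge_on_cycle (subsetP (sub_A j)) //=.
by apply: connect_sub ju => x y xy; apply/connect1/(subsetP (sub_A y)).
Qed.

End PruneStep.

Lemma sum_card_proper (I T : finType) (B H : I -> {set T}) j :
  (forall v, B v \subset H v) -> B j \proper H j -> \sum_v #|B v| < \sum_v #|H v|.
Proof.
move=> BH BHj; rewrite (bigD1 j) // [X in _ < X](bigD1 j) //= -addSn.
by apply: leq_add; [apply: proper_card | apply: leq_sum => v _; apply: subset_leq_card].
Qed.

Lemma achievable_pruned_closure n (A H : 'I_n -> {set 'I_n}) Rt :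
  (forall v, prune_acyclic_edges A v \subset H v) -> (forall v, H v \subset A v) ->
  achievable H Rt -> closure_Rn (achievable (prune_acyclic_edges A)) Rt.
Proof.
have [N] := ubnP (\sum_v #|H v|); elim: N H Rt => // N IH H Rt.
rewrite ltnS => H_small pruned_sub sub_A H_Rt.
case: (boolP [forall v, H v \subset prune_acyclic_edges A v]) => [/forallP H_pruned|].
  have -> : prune_acyclic_edges A = H.
    by apply: functional_extensionality => v; apply/eqP; rewrite eqEsubset pruned_sub H_pruned.
  exact: closure_Rn_refl.
rewrite negb_forall => /existsP[j /subsetPn[u uH u_acyclic]].
apply: (closure_Rn_trans _ (achievable_drop_in_edges (@out_closed_reach_set _ H j) H_Rt)).
move=> R1 B_R1; set B := drop_in_edges H _ in B_R1 *.
have BH v : B v \subset H v by apply: drop_in_edges_sub.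
have uB : u \notin B j := drop_reach_removes_acyclic sub_A uH u_acyclic.
apply: IH B_R1 => [|v|v].
- apply: leq_trans H_small; apply: (sum_card_proper (j := j)) => //.
  by apply/properP; split=> //; exists u.
- exact: prune_sub_drop_reach j pruned_sub v.
- exact: subset_trans (BH v) (sub_A v).
Qed.

Theorem mainTheorem8 (n : nat) (A : 'I_n -> {set 'I_n}) :
  side_info_ok A ->
  forall Rt : 'I_n -> R,
    capacity_region A Rt <-> capacity_region (prune_acyclic_edges A) Rt.
Proof.
(* The argument works for arbitrary side information sets. *)
move=> _ Rt.
have pruned_sub j : prune_acyclic_edges A j \subset A j.
  by apply/subsetP=> i; rewrite inE => /andP[].
split; apply: closure_Rn_trans => R1 R1_ach.
  exact: achievable_pruned_closure R1_ach.
exact/closure_Rn_refl/(achievable_sub pruned_sub).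
Qed.
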